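(* Let $y\ge 1$ and $m\ge 2$ be integers. Consider the random walk $(X_t)_{t\ge 0}$ on $\mathbb{Z}$ with $X_0=m-1$ whose steps are independent and equal to $+y$ or $-1$, each with probability $\tfrac12$, stopped at the first time $\tau$ at which $X_\tau\in\{0\}\cup\{m,m+1,\dots,m+y-1\}$. For $j\ge 0$ let $\rho_j$ be the probability that $\tau<\infty$, $X_\tau\in\{m,\dots,m+y-1\}$, and exactly $j$ of the first $\tau$ steps are $-1$ steps, and set $$p_r(z)=\sum_{j\ge 0}\rho_j\, z^{j+1}.$$ For an integer $k$ define $$u[y,k](z)=\sum_{\substack{n\ge 0\\ (y+1)n-k<0}}\frac{z^{yn}}{2^{(y+1)n+1-k}}\binom{(y+1)n-k}{n}.$$ Then, as formal power series in $z$, $$p_r(z)=\frac{z\,u[y,m-1](z)+z^{2}\,u[y,m-2](z)+\cdots+z^{y}\,u[y,m-y](z)}{u[y,m](z)}.$$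
   Context: For an integer $a$ (possibly negative) and $n\ge 0$, $\binom{a}{n}=a(a-1)\cdots(a-n+1)/n!$. The sum defining $u[y,k]$ is finite, and is the empty sum $0$ when $k\le 0$. Before absorption the walk stays in $\{1,\dots,m-1\}$, so it cannot jump over the right absorbing set $\{m,\dots,m+y-1\}$. $p_r$ is the generating function for absorption at one of the right-hand barriers $m,\dots,m+y-1$, with $z$ marking backward steps and an extra overall factor $z$. *)

From mathcomp Require Import all_boot all_order all_algebra.
From mathcomp Require Import zify.
Set Implicit Arguments. Unset Strict Implicit. Unset Printing Implicit Defensive.
Import Order.TTheory GRing.Theory Num.Theory.
Local Open Scope ring_scope.

Definition gbinom (a : int) (n : nat) : rat :=
  (\prod_(i < n) (a - i%:Z)%:~R) / (n`!)%:R.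

(* The condition (y+1)n - k < 0 forces n < k <= |k|, so summing over n < |k|
   loses no term. *)
Definition u (y : nat) (k : int) : {poly rat} :=
  \sum_(n < absz k | ((y.+1 * n)%:Z - k < 0))
     ((gbinom ((y.+1 * n)%:Z - k) n / (2%:R : rat) ^ ((y.+1 * n)%:Z + 1 - k))
        *: 'X^(y * n)).

(* Walk paths: a finite sequence of steps, true = +y step, false = -1 step. *)
Definition pos (y m : nat) (s : seq bool) : int :=
  (m%:Z - 1) + (y * count id s)%:Z - (count negb s)%:Z.

(* s is exactly the sequence of the first tau steps of a walk absorbed on the
   right: every proper prefix keeps the walk in {1,...,m-1} (not yet absorbed)
   and the full sequence ends in {m,...,m+y-1}. *)
Definition right_absorbed (y m : nat) (s : seq bool) : bool :=
  all (fun i => (1 <= pos y m (take i s)) && (pos y m (take i s) <= m%:Z - 1))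
      (iota 0 (size s))
  && (m%:Z <= pos y m s) && (pos y m s <= m%:Z + y%:Z - 1).

Lemma right_absorbed_size (y m : nat) (s : seq bool) :
  (1 <= y)%N -> right_absorbed y m s -> (size s < 2 * count negb s + 2)%N.
Proof.
move=> y1 /andP[/andP[_ _] hi].
have hs := count_predC id s.
move: hi; rewrite /pos => hi.
have : ((y * count id s)%:Z <= y%:Z + (count negb s)%:Z)%R.
  by move: hi; set a := (y * _)%:Z; set b := (count negb s)%:Z; lia.
move=> h.
have h' : (y * count id s <= y + count negb s)%N by lia.
have hpred : count (predC id) s = count negb s by [].
nia.
Qed.

(* By [right_absorbed_size] only lengths L < 2j+2 occur. *)
Definition rho (y m j : nat) : rat :=
  \sum_(L < (2 * j + 2)%N)
    \sum_(t : L.-tuple bool | right_absorbed y m t && (count negb t == j))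
      ((2%:R : rat) ^- L).

Definition pr_coef (y m N : nat) : rat :=
  if N is j.+1 then rho y m j else 0.

Definition pr_num (y m : nat) : {poly rat} :=
  \sum_(i < y) 'X^(i.+1) * u y (m%:Z - (i.+1)%:Z).

From mathcomp Require Import all_boot all_order all_algebra.
From mathcomp Require Import zify ring.
Set Implicit Arguments. Unset Strict Implicit. Unset Printing Implicit Defensive.
Import Order.TTheory GRing.Theory Num.Theory.
Local Open Scope ring_scope.

(* The u[y,k] satisfy u[k] - 2 u[k-1] + z^y u[k-y-1] = [k = 1] (Pascal's rule), so for
   every solution f of the homogeneous recurrence x |-> z^x f(m - x) is harmonic for the
   walk: 2 h(x) = h(x + y) + z h(x - 1) on {1, ..., m-1}.  Besides u there is a second
   solution phi, built from the numerator and extended below 1 so that z^x phi(m - x)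
   equals z^(m+y-1) on the right barrier.  The combination
   h(x) = u[m] z^x phi(m - x) - phi(m) z^x u[m - x] is harmonic, vanishes at 0, equals
   u[m] z^(m+y-1) on the right barrier and z^(m+y-2) times the numerator at m - 1.
   Unrolling harmonicity n steps from m - 1 writes h(m - 1) as u[m] z^(m+y-1) times the
   absorption generating function truncated at n steps, plus the contribution of the paths
   still inside, whose z-valuation grows linearly in n; comparing coefficients gives the
   identity. *)

Lemma gbinom0 a : gbinom a 0 = 1.
Proof. by rewrite /gbinom big_ord0 fact0 divr1. Qed.

Lemma gbinomSr a n : gbinom a n.+1 = gbinom a n * (a - n%:Z)%:~R / n.+1%:R.
Proof.
rewrite /gbinom big_ord_recr /= factS natrM.
have nz_fact : ((n`!)%:R : rat) != 0 by rewrite pnatr_eq0 -lt0n fact_gt0.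
by field; rewrite nat1r pnatr_eq0 nz_fact.
Qed.

Lemma gbinomSl a n : gbinom (a + 1) n.+1 = (a + 1)%:~R * gbinom a n / n.+1%:R.
Proof.
rewrite /gbinom big_ord_recl /= factS natrM subr0.
have nz_fact : ((n`!)%:R : rat) != 0 by rewrite pnatr_eq0 -lt0n fact_gt0.
under eq_bigr do rewrite /bump /= add1n -addn1 PoszD opprD addrACA subrr addr0.
by field; rewrite nat1r pnatr_eq0 nz_fact.
Qed.

Lemma gbinom_pascal a n : gbinom a n.+1 + gbinom a n = gbinom (a + 1) n.+1.
Proof.
rewrite gbinomSr gbinomSl !intrD intrN -!pmulrn /= -[n.+1]addn1 natrD /=.
by field; rewrite natr1 pnatr_eq0.
Qed.

Definition ucoef (a : int) (n : nat) : rat :=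
  if a < 0 then gbinom a n / 2%:R ^ (a + 1) else 0.

Lemma ucoef_rec a n :
  ucoef a n - 2%:R * ucoef (a + 1) n + (if n is n'.+1 then ucoef a n' else 0)
  = ((a == -1) && (n == 0%N))%:R.
Proof.
rewrite /ucoef.
have nz_pow : (2%:R : rat) ^ (a + 1) != 0 by apply: expfz_neq0.
have -> : (2%:R : rat) ^ (a + 1 + 1) = 2 ^ (a + 1) * 2 by rewrite expfzDr // expr1z.
have [a_lt|a_ge] := ltrP a (-1).
  have a_neg : a < 0 by lia.
  have a1_neg : a + 1 < 0 by lia.
  have -> : (a == -1) = false by lia.
  rewrite a_neg a1_neg.
  by case: n => [|n]; rewrite ?gbinom0 -?gbinom_pascal /=; field; rewrite nz_pow.
have [a_lt0|a_ge0] := ltrP a 0.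
  have -> : a = -1 by lia.
  rewrite /= expr0z !divr1 mulr0 subr0.
  case: n => [|n]; rewrite ?gbinom0 ?addr0 /= ?divr1 //.
  by rewrite gbinom_pascal gbinomSl addNr !mul0r.
have -> : (a + 1 < 0) = false by lia.
have -> : (a == -1) = false by lia.
by case: n => [|n]; rewrite /= mulr0 subr0 ?addr0.
Qed.

Section URecurrence.
Variable y : nat.

Definition rec_defect (f : int -> {poly rat}) (k : int) : {poly rat} :=
  f k - 2%:R * f (k - 1) + 'X^y * f (k - y.+1%:Z).

Lemma uE k B : (`|k| <= B)%N ->
  u y k = \sum_(n < B) ucoef ((y.+1 * n)%:Z - k) n *: 'X^(y * n).
Proof.
move=> kB; rewrite /u big_mkcond /=.
pose F n := ucoef ((y.+1 * n)%:Z - k) n *: 'X^(y * n).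
rewrite (eq_bigr (fun n : 'I_ _ => F n)) => [|n _]; last first.
  by rewrite /F /ucoef; case: ifP => _; [rewrite addrAC | rewrite scale0r].
rewrite (big_ord_widen B F kB) [RHS](bigID (fun n : 'I_B => (n < `|k|)%N)) /=.
rewrite [X in _ = _ + X]big1 ?addr0 // => n.
by rewrite -leqNgt /F /ucoef => kn; rewrite ifF ?scale0r //; lia.
Qed.

Lemma u_rec k : rec_defect (u y) k = (k == 1)%:R.
Proof.
pose B := (`|k| + y.+1)%N.
rewrite /rec_defect (@uE k B.+1) ?(@uE (k - 1) B.+1) ?(@uE (k - y.+1%:Z) B); try lia.
have -> : 'X^y * \sum_(n < B) ucoef ((y.+1 * n)%:Z - (k - y.+1%:Z)) n *: 'X^(y * n) =
    \sum_(n < B.+1)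
      (if (n : nat) is n'.+1 then ucoef ((y.+1 * n)%:Z - k) n' else 0) *: 'X^(y * n).
  rewrite big_ord_recl scale0r add0r mulr_sumr; apply: eq_bigr => n _.
  rewrite lift0 -scalerAr -exprD mulnS.
  by congr (ucoef _ _ *: _); [rewrite PoszD; ring | rewrite mulnS].
rewrite mulr_sumr -sumrB -big_split /=.
under eq_bigr => n _.
  rewrite mulr_natl scalerMnl -mulr_natl -scalerBl -scalerDl.
  have -> : (y.+1 * n)%:Z - (k - 1) = (y.+1 * n)%:Z - k + 1 by ring.
  rewrite ucoef_rec.
  over.
rewrite big_ord_recl big1 => [|n _]; last by rewrite andbF scale0r.
rewrite addr0 /= !muln0 expr0 andbT scaler_nat.
by have -> : (0%:Z - k == -1) = (k == 1) by lia.
Qed.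

Lemma u_le0 k : k <= 0 -> u y k = 0.
Proof. by move=> k_le0; rewrite /u big1 // => n; lia. Qed.

Lemma u1 : u y 1 = 1.
Proof. by rewrite /u big_mkcond big_ord1 /= !muln0 gbinom0 expr0z divr1 scale1r. Qed.

Definition psi (k : int) : {poly rat} :=
  2%:R * u y k - \sum_(i < y) 'X^(i.+1) * u y (k - i.+1%:Z).

Lemma psi_rec_defect k : 2 <= k ->
  rec_defect psi k = if k <= y.+1%:Z then - 'X^(absz (k - 1)%R) else 0.
Proof.
move=> k_ge2.
have -> : rec_defect psi k =
    2%:R * rec_defect (u y) k - \sum_(i < y) 'X^(i.+1) * rec_defect (u y) (k - i.+1%:Z).
  have -> : \sum_(i < y) 'X^(i.+1) * rec_defect (u y) (k - i.+1%:Z) =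
      \sum_(i < y) 'X^(i.+1) * u y (k - i.+1%:Z)
      - 2%:R * \sum_(i < y) 'X^(i.+1) * u y (k - 1 - i.+1%:Z)
      + 'X^y * \sum_(i < y) 'X^(i.+1) * u y (k - y.+1%:Z - i.+1%:Z).
    rewrite !mulr_sumr -sumrB -big_split /=; apply: eq_bigr => i _.
    rewrite /rec_defect (addrAC k) (addrAC k (- i.+1%:Z)); ring.
  by rewrite /rec_defect /psi; ring.
rewrite u_rec (_ : (k == 1) = false) ?mulr0 ?sub0r; last by lia.
under eq_bigr do rewrite u_rec.
case: ifP => k_small.
  have j_lt : (`|k|.-2 < y)%N by lia.
  rewrite (bigD1 (Ordinal j_lt)) //= big1 => [|i /negP i_ne]; last first.
    rewrite (_ : (k - i.+1%:Z == 1) = false) ?mulr0 //.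
    by apply/negP=> /eqP ki; apply: i_ne; apply/eqP/val_inj => /=; lia.
  by rewrite (_ : (k - _ == 1) = true) ?mulr1 ?addr0; [congr (- 'X^_) | ]; lia.
rewrite big1 ?oppr0 // => i _.
by rewrite (_ : (k - i.+1%:Z == 1) = false) ?mulr0 //; have := ltn_ord i; lia.
Qed.

Lemma psi_le0 k : k <= 0 -> psi k = 0.
Proof.
move=> k_le0; rewrite /psi u_le0 // mulr0 sub0r big1 ?oppr0 // => i _.
by rewrite u_le0 ?mulr0 //; lia.
Qed.

(* The values z^(k+y-1) on 1-y..0 are forced by the recurrence at k = 2..y+1, where
   rec_defect psi k = - z^(k-1). *)
Definition phi (k : int) : {poly rat} :=
  if 1 <= k then 'X^(y.-1) * psi k
  else if 1 - y%:Z <= k then 'X^(absz (k + y%:Z - 1)%R) else 0.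

Lemma phi_pos k : 1 <= k -> phi k = 'X^(y.-1) * psi k.
Proof. by move=> k_ge1; rewrite /phi k_ge1. Qed.

Lemma phi_tail k : k <= 0 -> 1 - y%:Z <= k -> phi k = 'X^(absz (k + y%:Z - 1)%R).
Proof. by move=> k_le0 k_ge; rewrite /phi k_ge ifF //; lia. Qed.

Hypothesis y_gt0 : (0 < y)%N.

Lemma phi_rec_defect k : 2 <= k -> rec_defect phi k = 0.
Proof.
move=> k_ge2; have := psi_rec_defect k_ge2.
rewrite /rec_defect (@phi_pos k) ?(@phi_pos (k - 1)); try lia.
have [k_small|k_large] := lerP k y.+1%:Z; last first.
  rewrite (@phi_pos (k - y.+1%:Z)) => [Dpsi|]; last by lia.
  by rewrite -(mulr0 'X^(y.-1)) -Dpsi; ring.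
rewrite phi_tail ?(@psi_le0 (k - y.+1%:Z)) ?mulr0 ?addr0 => [Dpsi|||]; try lia.
transitivity ('X^(y.-1) * (psi k - 2%:R * psi (k - 1))
    + 'X^y * 'X^(absz (k - y.+1%:Z + y%:Z - 1)%R)); first by ring.
rewrite Dpsi mulrN -!exprD addrC; apply/eqP; rewrite subr_eq0; apply/eqP.
by congr 'X^_; lia.
Qed.

End URecurrence.

Lemma big_tuple0 (V : nmodType) (T : finType) (F : seq T -> V) :
  \sum_(t : 0.-tuple T) F t = F [::].
Proof.
rewrite (eq_bigr (fun _ => F [::])) => [|t _]; last by rewrite tuple0.
by rewrite sumr_const card_tuple expn0.
Qed.

Lemma big_tupleS (V : nmodType) (T : finType) L (F : seq T -> V) :
  \sum_(t : L.+1.-tuple T) F t = \sum_(a : T) \sum_(t : L.-tuple T) F (a :: t).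
Proof.
rewrite pair_big /= (reindex (fun p : T * L.-tuple T => [tuple of p.1 :: p.2])) //.
exists (fun t : L.+1.-tuple T => (thead t, [tuple of behead t])).
  by move=> [a t] _ /=; rewrite theadE; congr pair; apply: val_inj.
by move=> t _; rewrite [RHS]tuple_eta.
Qed.

Lemma scale_half_double (R : numFieldType) (p : {poly R}) : 2%:R^-1 *: (2%:R * p) = p.
Proof. by rewrite -mul_polyC mulrA -polyC_natr -polyCM mulVf ?mul1r // pnatr_eq0. Qed.

Section Walk.
Variables y m : nat.

Definition interior (x : int) := (1 <= x) && (x <= m%:Z - 1).
Definition on_right (x : int) := (m%:Z <= x) && (x <= m%:Z + y%:Z - 1).
Definition step (b : bool) : int := if b then y%:Z else -1.

Definition walk_pos (x : int) (s : seq bool) : int :=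
  x + (y * count id s)%:Z - (count negb s)%:Z.

Definition absorbed_from (x : int) (s : seq bool) : bool :=
  all (fun i => interior (walk_pos x (take i s))) (iota 0 (size s))
  && on_right (walk_pos x s).

Lemma right_absorbedE s : right_absorbed y m s = absorbed_from (m%:Z - 1) s.
Proof. by rewrite /right_absorbed -andbA. Qed.

Lemma walk_pos_nil x : walk_pos x [::] = x.
Proof. by rewrite /walk_pos /=; lia. Qed.

Lemma walk_pos_cons x b s : walk_pos x (b :: s) = walk_pos (x + step b) s.
Proof. by rewrite /walk_pos /step; case: b => /=; lia. Qed.

Lemma absorbed_from_nil x : absorbed_from x [::] = on_right x.
Proof. by rewrite /absorbed_from /= walk_pos_nil. Qed.

Lemma absorbed_from_cons x b s :
  absorbed_from x (b :: s) = interior x && absorbed_from (x + step b) s.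
Proof.
rewrite /absorbed_from /= walk_pos_nil -andbA walk_pos_cons; congr (_ && (_ && _)).
by rewrite -(addn0 1%N) iotaDl all_map; apply: eq_all => i /=; rewrite walk_pos_cons.
Qed.

Fixpoint absorb_gf (L : nat) (x : int) : {poly rat} :=
  if L is L'.+1 then
    if interior x then 2%:R^-1 *: (absorb_gf L' (x + y%:Z) + 'X * absorb_gf L' (x - 1))
    else 0
  else (on_right x)%:R.

Lemma coef_absorb_gf L x j :
  (absorb_gf L x)`_j =
  \sum_(t : L.-tuple bool | absorbed_from x t && (count negb t == j)) 2%:R ^- L.
Proof.
pose F L x j (s : seq bool) : rat :=
  if absorbed_from x s && (count negb s == j) then 2%:R ^- L else 0.
rewrite big_mkcond -/(F L x j _) /=; elim: L x j => [|L IH] x j /=.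
  rewrite (big_tuple0 (F 0%N x j)) /F absorbed_from_nil expr0 invr1 coefMn coef1.
  by case: (on_right x); case: j.
rewrite (big_tupleS L (F L.+1 x j)) big_bool /F /=.
under eq_bigr do rewrite absorbed_from_cons.
under [X in _ = _ + X]eq_bigr do rewrite absorbed_from_cons.
case: (interior x) => /=; last by rewrite coef0 !big1.
rewrite coefZ coefD coefXM !IH mulrDr; congr (_ + _).
  rewrite mulr_sumr; apply: eq_bigr => t _.
  by case: ifP => _; rewrite ?mulr0 // exprSr invfM mulrC.
case: j => [|j] /=; first by rewrite mulr0 big1 // => t _; rewrite andbF.
rewrite mulr_sumr; apply: eq_bigr => t _; rewrite eqSS.
by case: ifP => _; rewrite ?mulr0 // exprSr invfM mulrC.
Qed.

Fixpoint survive_gf (h : int -> {poly rat}) (n : nat) (x : int) : {poly rat} :=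
  if interior x then
    if n is n'.+1 then
      2%:R^-1 *: (survive_gf h n' (x + y%:Z) + 'X * survive_gf h n' (x - 1))
    else h x
  else 0.

Definition harmonic (h : int -> {poly rat}) :=
  forall x, interior x -> 2%:R * h x = h (x + y%:Z) + 'X * h (x - 1).

Section OptionalStopping.
Variables (h : int -> {poly rat}) (c : {poly rat}).
Hypotheses (h_harm : harmonic h) (h0 : h 0 = 0) (h_right : forall x, on_right x -> h x = c).

Lemma absorbing_value x : 0 <= x <= m%:Z + y%:Z - 1 -> ~~ interior x ->
  h x = c * (on_right x)%:R.
Proof.
move=> x_range x_out; have [x_right|x_left] := boolP (on_right x).
  by rewrite h_right // mulr1.
rewrite mulr0 (_ : x = 0) //.
by move: x_range x_out x_left; rewrite /interior /on_right; lia.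
Qed.

Lemma optional_stopping n x : 0 <= x <= m%:Z + y%:Z - 1 ->
  h x = c * \sum_(L < n.+1) absorb_gf L x + survive_gf h n x.
Proof.
elim: n x => [|n IH] x x_range.
  rewrite big_ord1 /=; case: ifPn => x_int; last by rewrite addr0 absorbing_value.
  rewrite (_ : on_right x = false) ?mulr0 ?add0r //.
  by move: x_int; rewrite /interior /on_right; lia.
rewrite big_ord_recl /=; case: ifPn => x_int; last first.
  by rewrite big1 ?addr0 ?absorbing_value.
have x_step : 0 <= x + y%:Z <= m%:Z + y%:Z - 1 /\ 0 <= x - 1 <= m%:Z + y%:Z - 1.
  by move: x_int; rewrite /interior; lia.
have x_out : on_right x = false by move: x_int; rewrite /interior /on_right; lia.
rewrite x_out add0r -scaler_sumr big_split /= -mulr_sumr.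
rewrite -[h x]scale_half_double h_harm //.
rewrite (IH (x + y%:Z)) ?(IH (x - 1)); try by case: x_step.
by rewrite -scalerAr -scalerDr; congr (_ *: _); ring.
Qed.

End OptionalStopping.

(* A path still inside after n steps from x has made at least
   (y n + x + 1 - m) / (y + 1) down-steps. *)
Lemma coef_survive_gf_small h n x d i :
  (y.+1 * d)%:Z <= (y * n)%:Z + x + 1 - m%:Z -> (i < d)%N -> (survive_gf h n x)`_i = 0.
Proof.
elim: n x d i => [|n IH] x d i d_le i_lt /=; case: ifPn => x_int; rewrite ?coef0 //.
  by move: x_int; rewrite /interior; lia.
rewrite coefZ coefD coefXM (IH (x + y%:Z) d) //; last by lia.
case: i i_lt => [|i] i_lt /=; first by rewrite addr0 mulr0.
by rewrite (IH (x - 1) d.-1) ?addr0 ?mulr0 //; lia.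
Qed.

Hypothesis y_gt0 : (0 < y)%N.

Lemma rhoE j n : (2 * j + 2 <= n)%N ->
  rho y m j = \sum_(L < n) (absorb_gf L (m%:Z - 1))`_j.
Proof.
move=> n_ge; pose F L :=
  \sum_(t : L.-tuple bool | right_absorbed y m t && (count negb t == j)) (2%:R : rat) ^- L.
rewrite /rho (big_ord_widen n F n_ge) /=.
rewrite [RHS](bigID (fun L : 'I_n => (L < 2 * j + 2)%N)) /= [X in _ = _ + X]big1 ?addr0.
  apply: eq_bigr => L _; rewrite coef_absorb_gf.
  by apply: eq_bigl => t; rewrite right_absorbedE.
move=> L; rewrite -leqNgt => L_ge; rewrite coef_absorb_gf big_pred0 // => t.
apply/negbTE/andP => -[t_abs /eqP t_down].
rewrite -right_absorbedE in t_abs.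
by have := right_absorbed_size y_gt0 t_abs; rewrite t_down size_tuple; lia.
Qed.

End Walk.

Section HarmonicSolution.
Variables y m : nat.
Hypotheses (y_gt0 : (0 < y)%N) (m_gt0 : (0 < m)%N).

Definition shift_gf (f : int -> {poly rat}) (x : int) : {poly rat} :=
  'X^(absz x) * f (m%:Z - x).

Lemma shift_gf_harmonic f x : interior m x -> rec_defect y f (m%:Z - x + 1) = 0 ->
  2%:R * shift_gf f x = shift_gf f (x + y%:Z) + 'X * shift_gf f (x - 1).
Proof.
rewrite /interior => x_int; have [n x_eq] : exists n : nat, x = n.+1%:Z.
  by exists (absz x).-1; lia.
rewrite /rec_defect /shift_gf x_eq (_ : n.+1%:Z + y%:Z = (n.+1 + y)%N%:Z) ?PoszD //.
rewrite (_ : n.+1%:Z - 1 = n%:Z); last by lia.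
rewrite (_ : m%:Z - n.+1%:Z + 1 - 1 = m%:Z - n.+1%:Z); last by ring.
rewrite (_ : m%:Z - n.+1%:Z + 1 - y.+1%:Z = m%:Z - (n.+1 + y)%N%:Z); last by lia.
rewrite (_ : m%:Z - n.+1%:Z + 1 = m%:Z - n%:Z); last by lia.
rewrite /absz exprD exprS => def0.
transitivity (2%:R * ('X * 'X^n * f (m%:Z - n.+1%:Z)) + 'X * 'X^n * 0); first by ring.
by rewrite -def0; ring.
Qed.

Definition harmonic_sol (x : int) : {poly rat} :=
  u y m * shift_gf (phi y) x - phi y m * shift_gf (u y) x.

Lemma harmonic_sol_harmonic : harmonic y m harmonic_sol.
Proof.
move=> x x_int; have k_ge2 : 2 <= m%:Z - x + 1 by move: x_int; rewrite /interior; lia.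
have phi_harm := shift_gf_harmonic x_int (phi_rec_defect y_gt0 k_ge2).
have u_harm :
    2%:R * shift_gf (u y) x = shift_gf (u y) (x + y%:Z) + 'X * shift_gf (u y) (x - 1).
  by apply: shift_gf_harmonic; rewrite // u_rec (_ : (_ == 1) = false) //; lia.
transitivity (u y m * (2%:R * shift_gf (phi y) x) - phi y m * (2%:R * shift_gf (u y) x)).
  by rewrite /harmonic_sol; ring.
by rewrite phi_harm u_harm /harmonic_sol; ring.
Qed.

Lemma harmonic_sol0 : harmonic_sol 0 = 0.
Proof. by rewrite /harmonic_sol /shift_gf /= expr0 subr0 !mul1r mulrC subrr. Qed.

Lemma harmonic_sol_right x : on_right y m x -> harmonic_sol x = u y m * 'X^(m + y - 1).
Proof.
rewrite /on_right => x_right.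
have [r [x_eq r_lt]] : exists r : nat, x = (m + r)%N%:Z /\ (r < y)%N.
  by exists (absz x - m)%N; split; lia.
rewrite /harmonic_sol /shift_gf x_eq (_ : m%:Z - (m + r)%N%:Z = - r%:Z); last first.
  by rewrite PoszD; ring.
rewrite (@u_le0 y (- r%:Z)) ?mulr0 ?subr0 ?(@phi_tail y (- r%:Z)) -?exprD; try lia.
by congr (_ * 'X^_); lia.
Qed.

Lemma harmonic_sol_start : harmonic_sol (m%:Z - 1) = 'X^(m + y - 2) * pr_num y m.
Proof.
rewrite /harmonic_sol /shift_gf (_ : m%:Z - (m%:Z - 1) = 1) ?u1 ?mulr1; last by ring.
rewrite !phi_pos //.
rewrite (_ : psi y 1 = 2%:R); last first.
  by rewrite /psi u1 mulr1 big1 ?subr0 // => i _; rewrite u_le0 ?mulr0 //; lia.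
rewrite (_ : 'X^(m + y - 2) = 'X^(absz (m%:Z - 1)) * 'X^(y.-1) :> {poly rat}); last first.
  by rewrite -exprD; congr 'X^_; lia.
by rewrite /psi /pr_num; ring.
Qed.

End HarmonicSolution.

Theorem mainTheorem2 (y m : nat) (hy : (1 <= y)%N) (hm : (2 <= m)%N) :
  forall N : nat,
    \sum_(i < N.+1) (u y m%:Z)`_i * pr_coef y m (N - i) = (pr_num y m)`_N.
Proof.
move=> N; pose n := (2 * (N + m + y))%N.
pose S := \sum_(L < n.+1) absorb_gf y m L (m%:Z - 1).
have m_gt0 : (0 < m)%N by lia.
have start : 0 <= m%:Z - 1 <= m%:Z + y%:Z - 1 by lia.
have := optional_stopping (harmonic_sol_harmonic hy m_gt0) (harmonic_sol0 y m)
  (harmonic_sol_right hy m_gt0) n start.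
rewrite harmonic_sol_start // -/S (_ : u y m * 'X^(m + y - 1) * S =
    'X^(m + y - 2) * (u y m * ('X * S))); last first.
  by rewrite (_ : (m + y - 1 = (m + y - 2).+1)%N) ?exprSr; [ring | lia].
move/(congr1 (coefp (N + (m + y - 2)))) => /=.
rewrite coefD !coefXnM (_ : (N + (m + y - 2) < m + y - 2)%N = false) ?addnK; last by lia.
rewrite (@coef_survive_gf_small y m _ n _ (N + m + y - 1)) ?addr0 => [->||]; try nia.
rewrite coefM; apply: eq_bigr => i _; congr (_ * _).
rewrite coefXM /pr_coef; case def_j: (N - i)%N => [|j] //=.
by rewrite /S coef_sum (@rhoE y m hy j n.+1) // /n; lia.
Qed.
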